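(* Let $a,b\geq1$ and let $\mu=(\mu_{ij})_{i,j\ge0}$ be a semi-infinite complex matrix with $\mu_{i+a,j+b}=\mu_{ij}$, and set $\widehat\mu_{ij}=\mu_{i,j+b}$. Define bilinear forms on $\mathbb C[z]$ by $\langle z^i,z^j\rangle_\mu=\mu_{ij}$ and $\langle z^i,z^j\rangle_{\widehat\mu}=\widehat\mu_{ij}$. Let $p^{(1)}_j,p^{(2)}_j$ and $\widehat p^{(1)}_j,\widehat p^{(2)}_j$ ($j\ge0$) be monic polynomials of degree $j$ with $$\langle p^{(1)}_i,p^{(2)}_j\rangle_\mu=\delta_{ij}h_i,\qquad \langle \widehat p^{(1)}_i,\widehat p^{(2)}_j\rangle_{\widehat\mu}=\delta_{ij}\widehat h_i,$$ and let $S_1,S_2,\widehat S_1,\widehat S_2$ be the semi-infinite matrices defined by $$p^{(1)}_i(z)=\sum_{k=0}^i(S_1)_{ik}z^k,\quad p^{(2)}_i(z)=h_i\sum_{k=0}^i(S_2^{-1})_{ki}z^k,$$ and analogously for $\widehat p^{(1)},\widehat p^{(2)}$ with $\widehat S_1,\widehat S_2,\widehat h$. Suppose these satisfy $$S_1\Lambda^a\widehat S_1^{-1}=S_2\widehat S_2^{-1}=:A,\qquad S_1\widehat S_1^{-1}=S_2\Lambda^{-b}\widehat S_2^{-1}=:B .$$ Then, writing $p^{(i)}$ (resp. $\widehat p^{(i)}$) for the semi-infinite column vector with $j$-th entry $p^{(i)}_j$ (resp. $\widehat p^{(i)}_j$), $h=\mathrm{diag}(h_0,h_1,\dots)$ and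 $\widehat h=\mathrm{diag}(\widehat h_0,\widehat h_1,\dots)$, $$A\widehat p^{(1)}=z^ap^{(1)},\qquad \widehat hA^Th^{-1}p^{(2)}=\widehat p^{(2)},\qquad B\widehat p^{(1)}=p^{(1)},\qquad \widehat hB^Th^{-1}p^{(2)}=z^b\widehat p^{(2)} .$$
   Context: In the semi-infinite setting, $\Lambda$ is the semi-infinite matrix $(\Lambda)_{ij}=\delta_{i+1,j}$ ($i,j\ge0$) and $\Lambda^{-1}$ denotes its transpose $(\Lambda^{-1})_{ij}=\delta_{i,j+1}$ (a right inverse only: $\Lambda^{-1}\Lambda=1-E_{11}$ with $(E_{11})_{ij}=\delta_{i0}\delta_{j0}$). $A^T,B^T$ denote transposes. All the $h_i,\widehat h_i$ are assumed nonzero. *)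

From mathcomp Require Import all_boot all_algebra.
From mathcomp.real_closed Require Import complex.
From mathcomp Require Import reals.
Set Implicit Arguments. Unset Strict Implicit. Unset Printing Implicit Defensive.
Import GRing.Theory.
Local Open Scope ring_scope.

Definition smat (T : Type) := nat -> nat -> T.

(* This is how entries of products of
   semi-infinite matrices (and matrix-vector products) are understood. *)
Definition fsum (V : nmodType) (f : nat -> V) (v : V) : Prop :=
  exists N : nat, (forall k, (N <= k)%N -> f k = 0) /\ \sum_(k < N) f k = v.

Definition mprod (C : nzRingType) (X Y Z : smat C) : Prop :=
  forall i j, fsum (fun k => X i k * Y k j) (Z i j).

Definition idm (C : nzRingType) : smat C := fun i j => (i == j)%:R.

Definition Lam (C : nzRingType) (n : nat) : smat C := fun i j => (i + n == j)%:R.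
(* Lami n = (Lambda^{-1})^n,   (Lambda^{-1})_{ij} = delta_{i,j+1} *)
Definition Lami (C : nzRingType) (n : nat) : smat C := fun i j => (i == j + n)%:R.

Definition bform (C : nzRingType) (mu : smat C) (p q : {poly C}) : C :=
  \sum_(i < size p) \sum_(j < size q) p`_i * q`_j * mu i j.

From mathcomp Require Import all_boot all_algebra.
From mathcomp.real_closed Require Import complex.
From mathcomp Require Import reals.
Import GRing.Theory.
Set Implicit Arguments. Unset Strict Implicit.
Local Open Scope ring_scope.

(* Proof idea: every identity is an associativity statement.  Writing [x]
   for the column (z^k)_k, the defining relations read [p1 = S1 x],
   [ph1 = Sh1 x], [p2 = h S2inv^T x], [ph2 = hh Sh2inv^T x], so for instance
   [A ph1 = (S1 Lambda^a Sh1^-1) Sh1 x = S1 Lambda^a x = z^a p1].  The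
   triangularity of all factors (the inverses inherit it, the diagonals of
   Sh1 and S2inv being units by monicity) keeps every sum finite, which is
   what makes the regrouping legitimate for semi-infinite matrices.  The
   identities involving [p2] are the transposes of those involving [ph1]. *)

Definition lower_trig (C : nmodType) (X : smat C) : Prop :=
  forall i j, (i < j)%N -> X i j = 0.

Definition tr (C : Type) (X : smat C) : smat C := fun i j => X j i.

Definition shift (V : nmodType) (a : nat) (f : nat -> V) (m : nat) : V :=
  if (a <= m)%N then f (m - a)%N else 0.

Section FiniteSums.
Variable V : nmodType.
Implicit Types (f g : nat -> V) (v w : V).

Lemma sum_ord_widen f N M :
  (forall k, (N <= k)%N -> f k = 0) -> (N <= M)%N ->
  \sum_(k < M) f k = \sum_(k < N) f k.
Proof.
move=> f0 NM; rewrite -!(big_mkord xpredT) (big_cat_nat (leq0n N) NM) /=.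
rewrite [X in _ + X]big1_seq ?addr0 // => k /andP[_].
by rewrite mem_index_iota => /andP[/f0].
Qed.

Lemma fsum_sum f v N :
  fsum f v -> (forall k, (N <= k)%N -> f k = 0) -> v = \sum_(k < N) f k.
Proof.
case=> N' [f0' <-] f0; case: (leqP N N') => NN'.
  exact: sum_ord_widen.
by rewrite (sum_ord_widen f0' (ltnW NN')).
Qed.

Lemma eq_fsum f g v : f =1 g -> fsum f v -> fsum g v.
Proof.
move=> fg [N [f0 <-]]; exists N; split=> [k Nk|]; first by rewrite -fg f0.
by apply: eq_bigr => k _; rewrite fg.
Qed.

Lemma fsum_unique f v w : fsum f v -> fsum f w -> v = w.
Proof. by case=> N [f0 <-] /fsum_sum /(_ f0). Qed.

Lemma fsum_single f n : (forall k, k != n -> f k = 0) -> fsum f (f n).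
Proof.
move=> f0; exists n.+1; split=> [k nk|]; first by rewrite f0 // gtn_eqF.
by rewrite big_ord_recr /= big1 ?add0r // => k _; rewrite f0 // ltn_eqF.
Qed.

Lemma sum_shift a N f : \sum_(m < (a + N)%N) shift a f m = \sum_(k < N) f k.
Proof.
rewrite big_split_ord /= big1 ?add0r => [|m _]; last first.
  by rewrite /shift leqNgt ltn_ord.
by apply: eq_bigr => k _; rewrite /shift /= leq_addr addKn.
Qed.

Lemma shift_vanish a f N :
  (forall k, (N <= k)%N -> f k = 0) -> forall m, (a + N <= m)%N -> shift a f m = 0.
Proof.
move=> f0 m aNm; have am := leq_trans (leq_addr N a) aNm.
by rewrite /shift am f0 // leq_subRL.
Qed.

Lemma fsum_shift a f v : fsum f v -> fsum (shift a f) v.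
Proof.
case=> N [f0 <-]; exists (a + N)%N; split; first exact: shift_vanish.
exact: sum_shift.
Qed.

End FiniteSums.

Lemma fsum_scale (C : nzRingType) (V : lmodType C) (c : C) (f : nat -> V) v :
  fsum f v -> fsum (fun k => c *: f k) (c *: v).
Proof.
case=> N [f0 <-]; exists N; rewrite scaler_sumr.
by split=> // k /f0 ->; rewrite scaler0.
Qed.

Lemma sum_shift_comb (C : nzRingType) (V : lmodType C) a N
    (c : nat -> C) (x : nat -> V) :
  \sum_(m < (a + N)%N) shift a c m *: x m = \sum_(k < N) c k *: x (k + a)%N.
Proof.
rewrite -(sum_shift a N (fun k => c k *: x (k + a)%N)).
apply: eq_bigr => m _; rewrite /shift.
by case: leqP => am; rewrite ?subnK ?scale0r.
Qed.

Lemma mulXn_comb (C : comNzRingType) a N (c : nat -> C) :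
  'X^a * \sum_(k < N) c k *: 'X^k = \sum_(k < N) c k *: 'X^(k + a)%N.
Proof.
by rewrite mulr_sumr; apply: eq_bigr => k _; rewrite -scalerAr -exprD addnC.
Qed.

Lemma coef_comb_diag (C : nzRingType) (c : nat -> C) i :
  (\sum_(k < i.+1) c k *: 'X^k)`_i = c i.
Proof. by rewrite -poly_def coef_poly ltnSn. Qed.

Lemma coef_monic_size (C : nzRingType) (p : {poly C}) n :
  p \is monic -> size p = n.+1 -> p`_n = 1.
Proof. by move=> /monicP <- sz; rewrite lead_coefE sz. Qed.

Lemma lower_mprod_sum (C : nzRingType) (X Y Z : smat C) i j N :
  lower_trig X -> mprod X Y Z -> (i < N)%N -> Z i j = \sum_(k < N) X i k * Y k j.
Proof.
move=> LX XY iN; apply: fsum_sum (XY i j) _ => k Nk.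
by rewrite LX ?mul0r // (leq_trans iN Nk).
Qed.

Lemma lower_trig_rinv (C : unitRingType) (X Y : smat C) :
  lower_trig X -> (forall n, X n n \is a GRing.unit) -> mprod X Y (idm C) ->
  lower_trig Y.
Proof.
move=> LX uX XY; elim/ltn_ind=> n IH j nj.
have := lower_mprod_sum j LX XY (ltnSn n).
rewrite /idm ltn_eqF // big_ord_recr /= big1 ?add0r => [/esym XYnj|k _].
  by rewrite -(mulKr (uX n) (Y n j)) XYnj mulr0.
by rewrite IH ?mulr0 // (ltn_trans (ltn_ord k)).
Qed.

Lemma mprod_idm_tr (C : comNzRingType) (X Y : smat C) :
  mprod X Y (idm C) -> mprod (tr Y) (tr X) (idm C).
Proof.
move=> XY i j; rewrite /idm eq_sym.
by apply: eq_fsum (XY j i) => k; rewrite /tr mulrC.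
Qed.

Section ShiftMatrices.
Variable C : nzRingType.
Implicit Types X T : smat C.

Lemma mprod_Lam X T a i j : mprod X (Lam C a) T -> T i j = shift a (X i) j.
Proof.
move=> XT; apply: fsum_unique (XT i j) _; rewrite /shift /Lam.
case: leqP => aj; last first.
  apply: (@eq_fsum _ (fun=> 0)) => [k|]; last by exists 0; rewrite big_ord0.
  by rewrite gtn_eqF ?mulr0 // ltn_addl.
have := @fsum_single _ (fun k => X i k * (k + a == j)%N%:R) (j - a)%N.
rewrite subnK // eqxx mulr1; apply=> k kja.
by rewrite -{1}(subnK aj) eqn_add2r (negbTE kja) mulr0.
Qed.

Lemma mprod_Lami X T b i j : mprod X (Lami C b) T -> T i j = X i (j + b)%N.
Proof.
move=> XT; apply: fsum_unique (XT i j) _.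
have := @fsum_single _ (fun k => X i k * (k == j + b)%N%:R) (j + b)%N.
by rewrite eqxx mulr1; apply=> k /negbTE ->; rewrite mulr0.
Qed.

End ShiftMatrices.

Lemma fsum_change_basis_lower (C : nzRingType) (V : lmodType C) (X Y : smat C)
    (q x : nat -> V) (t s : nat -> C) N :
  lower_trig X -> lower_trig Y -> mprod Y X (idm C) ->
  (forall j, q j = \sum_(k < j.+1) X j k *: x k) ->
  (forall k, (N <= k)%N -> t k = 0) ->
  (forall j, fsum (fun m => t m * Y m j) (s j)) ->
  fsum (fun j => s j *: q j) (\sum_(k < N) t k *: x k).
Proof.
move=> LX LY YX qE t0 ts.
have sE j : s j = \sum_(m < N) t m * Y m j.
  by apply: fsum_sum (ts j) _ => m /t0 ->; rewrite mul0r.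
have qN (j : 'I_N) : q j = \sum_(k < N) X j k *: x k.
  rewrite qE; symmetry.
  apply: (@sum_ord_widen _ (fun k => X j k *: x k)) (ltn_ord j) => k /LX ->.
  by rewrite scale0r.
have coef_s (k : 'I_N) : \sum_(j < N) s j * X j k = t k.
  rewrite (eq_bigr (fun j : 'I_N => \sum_(m < N) t m * (Y m j * X j k))).
    rewrite exchange_big /= (bigD1 k) //= -mulr_sumr.
    rewrite -(lower_mprod_sum _ LY YX (ltn_ord k)) /idm eqxx mulr1.
    rewrite big1 ?addr0 // => m mk; rewrite -mulr_sumr.
    by rewrite -(lower_mprod_sum _ LY YX (ltn_ord m)) /idm val_eqE (negbTE mk) mulr0.
  by move=> j _; rewrite sE mulr_suml; apply: eq_bigr => m _; rewrite mulrA.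
exists N; split=> [j Nj|].
  rewrite sE big1 ?scale0r // => m _.
  by rewrite LY ?mulr0 // (leq_trans (ltn_ord m)).
rewrite (eq_bigr (fun j : 'I_N => \sum_(k < N) (s j * X j k) *: x k)).
  by rewrite exchange_big; apply: eq_bigr => k _; rewrite -scaler_suml coef_s.
by move=> j _; rewrite qN scaler_sumr; apply: eq_bigr => k _; rewrite scalerA.
Qed.

Lemma fsum_change_basis_upper (C : fieldType) (V : lmodType C) (W Z : smat C)
    (q x : nat -> V) (h : nat -> C) (c : C) (u y : nat -> C) N :
  lower_trig (tr W) -> lower_trig (tr Z) -> mprod Z W (idm C) ->
  (forall j, h j != 0) ->
  (forall j, q j = h j *: \sum_(k < j.+1) Z k j *: x k) ->
  (forall k, (N <= k)%N -> u k = 0) ->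
  (forall j, fsum (fun m => W j m * u m) (y j)) ->
  fsum (fun j => (c * y j / h j) *: q j) (c *: \sum_(k < N) u k *: x k).
Proof.
move=> LW LZ ZW hn qE u0 yu.
have yu' j : fsum (fun m => u m * tr W m j) (y j).
  by apply: eq_fsum (yu j) => m; rewrite mulrC.
have ZWtr := mprod_idm_tr ZW.
apply: eq_fsum (fsum_scale c (fsum_change_basis_lower LZ LW ZWtr (fun j => erefl) u0 yu')).
by move=> j; rewrite qE scalerA [RHS]scalerA divfK.
Qed.

Theorem proposition2p3 (R : realType) (a b : nat) (mu : smat R[i])
  (p1 p2 ph1 ph2 : nat -> {poly R[i]}) (h hh : nat -> R[i])
  (S1 S2 S2inv Sh1 Sh1inv Sh2inv A B : smat R[i]) :
  (1 <= a)%N -> (1 <= b)%N ->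
  (forall i j, mu (i + a)%N (j + b)%N = mu i j) ->
  (forall j, p1 j \is monic /\ size (p1 j) = j.+1) ->
  (forall j, p2 j \is monic /\ size (p2 j) = j.+1) ->
  (forall j, ph1 j \is monic /\ size (ph1 j) = j.+1) ->
  (forall j, ph2 j \is monic /\ size (ph2 j) = j.+1) ->
  (forall i, h i != 0) -> (forall i, hh i != 0) ->
  (forall i j, bform mu (p1 i) (p2 j) = (i == j)%:R * h i) ->
  (forall i j, bform (fun k l => mu k (l + b)%N) (ph1 i) (ph2 j) = (i == j)%:R * hh i) ->
  (forall i k, (i < k)%N -> S1 i k = 0) ->
  (forall i k, (i < k)%N -> Sh1 i k = 0) ->
  (forall k i, (i < k)%N -> S2inv k i = 0) ->
  (forall k i, (i < k)%N -> Sh2inv k i = 0) ->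
  (forall i, p1 i = \sum_(k < i.+1) S1 i k *: 'X^k) ->
  (forall i, p2 i = h i *: \sum_(k < i.+1) S2inv k i *: 'X^k) ->
  (forall i, ph1 i = \sum_(k < i.+1) Sh1 i k *: 'X^k) ->
  (forall i, ph2 i = hh i *: \sum_(k < i.+1) Sh2inv k i *: 'X^k) ->
  mprod S2 S2inv (idm R[i]) -> mprod S2inv S2 (idm R[i]) ->
  mprod Sh1 Sh1inv (idm R[i]) -> mprod Sh1inv Sh1 (idm R[i]) ->
  (exists T, mprod S1 (Lam R[i] a) T /\ mprod T Sh1inv A) ->
  mprod S2 Sh2inv A ->
  mprod S1 Sh1inv B ->
  (exists T, mprod S2 (Lami R[i] b) T /\ mprod T Sh2inv B) ->
  (forall i, fsum (fun j => A i j *: ph1 j) ('X^a * p1 i)) /\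
  (forall i, fsum (fun j => (hh i * A j i / h j) *: p2 j) (ph2 i)) /\
  (forall i, fsum (fun j => B i j *: ph1 j) (p1 i)) /\
  (forall i, fsum (fun j => (hh i * B j i / h j) *: p2 j) ('X^b * ph2 i)).
Proof.
move=> _ _ _ _ Mp2 Mph1 _ hn _ _ _ L1 Lh1 U2 Uh2 p1E p2E ph1E ph2E
  S2S2inv S2invS2 Sh1Sh1inv Sh1invSh1 [T [S1T TA]] S2A S1B [T' [S2T' T'B]].
have Sh1inv_lower : lower_trig Sh1inv.
  apply: lower_trig_rinv Lh1 _ Sh1Sh1inv => n; have [mon sz] := Mph1 n.
  by rewrite -(coef_comb_diag (Sh1 n)) -ph1E (coef_monic_size mon sz) unitr1.
have S2inv_upper : lower_trig (tr S2inv) := fun i j => U2 j i.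
have S2_upper : lower_trig (tr S2).
  apply: lower_trig_rinv S2inv_upper _ (mprod_idm_tr S2S2inv) => n.
  have [mon sz] := Mp2 n; have := coef_monic_size mon sz.
  rewrite p2E coefZ (coef_comb_diag (fun k => S2inv k n)) => hS2inv.
  by have := @unitr1 R[i]; rewrite -hS2inv unitrM => /andP[].
split; [|split; [|split]] => n.
- rewrite p1E mulXn_comb -sum_shift_comb.
  apply: (fsum_change_basis_lower (x := fun k => 'X^k) Lh1 Sh1inv_lower
    Sh1invSh1 ph1E) => [|j].
    exact: shift_vanish (L1 n).
  by apply: eq_fsum (TA n j) => m; rewrite (mprod_Lam _ _ S1T).
- have := fsum_change_basis_upper (hh n) S2_upper S2inv_upper S2invS2 hn p2E (Uh2^~ n) (S2A^~ n).
  by rewrite -ph2E.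
- rewrite p1E.
  exact: fsum_change_basis_lower Lh1 Sh1inv_lower Sh1invSh1 ph1E (L1 n) (S1B n).
- have fsum_B j : fsum (fun m => S2 j m * shift b (Sh2inv^~ n) m) (B j n).
    apply: eq_fsum (fsum_shift b (T'B j n)) => m; rewrite /shift.
    by case: leqP => bm; rewrite ?mulr0 // (mprod_Lami _ _ S2T') subnK.
  have := fsum_change_basis_upper (hh n) S2_upper S2inv_upper S2invS2 hn p2E
    (shift_vanish (a := b) (Uh2^~ n)) fsum_B.
  by rewrite sum_shift_comb -(mulXn_comb b n.+1 (Sh2inv^~ n)) scalerAr -ph2E.
Qed.
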